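(* (I) The positive cone $C_+^\dagger$ is equal to $\widehat{\mathbf{n}}_{\Lambda,+}(D^\dagger)$, the dual cone of $\mathbf{n}_{\Lambda,+}$ in $D^\dagger$. (II) The non-negative divisors in the first quadrant of $D^\dagger$ are given by $$C_+^\dagger\cap D_+^\dagger=\{\varrho\in D_+^\dagger:\langle\varrho,n^{\delta'}_{\mathfrak{s}}\rangle\ge0\text{ for all }\mathfrak{s}\in\Lambda^{(n-1)},\ \delta'\in\Lambda^{(0)}\setminus\mathfrak{s}\text{ with }\mathfrak{s}^\perp_{\delta'}\setminus\mathfrak{s}\ne\emptyset\},$$ $$\mathrm{Int}(C_+^\dagger)\cap\mathrm{Int}(D_+^\dagger)=\{\varrho\in \mathrm{Int}(D_+^\dagger):\langle\varrho,n^{\delta'}_{\mathfrak{s}}\rangle>0\text{ for all }\mathfrak{s}\in\Lambda^{(n-1)},\ \delta'\in\Lambda^{(0)}\setminus\mathfrak{s}\text{ with }\mathfrak{s}^\perp_{\delta'}\setminus\mathfrak{s}\ne\emptyset\},$$ and these satisfy $\iota^*(C_+^\dagger\cap D_+^\dagger)=\mathbf{n}^\dagger_{\Lambda,+}$ and $\iota^*(\mathrm{Int}(C_+^\dagger)\cap\mathrm{Int}(D_+^\dagger))=\mathrm{Int}(\mathbf{n}^\dagger_{\Lambda,+})$.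
   Context: $L$ is a lattice of rank $n$ with dual $L^*$; $(\Delta,L)$ is a reflexive polytope in $L_{\mathbb{R}}$ and $\Lambda$ a simplicial decomposition of $\partial\Delta$ with vertex set $\Lambda^{(0)}=L\cap(\partial\Delta\setminus\bigcup\{\mathrm{Int}(F):F\text{ facet of }\Delta\})$, $L$ generated by $\Lambda^{(0)}$; $\Lambda^{(n-1)}$ is the set of $(n-1)$-simplices, and ''$\delta\in\mathfrak{s}$'' means $\delta$ is a vertex of $\mathfrak{s}$. $D_\Delta=\bigoplus_{\delta\in\Lambda^{(0)}}\mathbb{Z}e^\delta$, $\beta:D_\Delta\to L$, $e^\delta\mapsto\delta$, $\mathbf{n}_\Delta=\ker\beta$, $\iota:\mathbf{n}_\Delta\hookrightarrow D_\Delta$ the inclusion; $D^\dagger=D_\Delta^\dagger\otimes\mathbb{Q}$ with basis $e^{\delta\dagger}$ dual to $e^\delta$, $\iota^*:D^\dagger\to\mathbf{n}_\Delta^\dagger\otimes\mathbb{Q}$ the restriction, $\beta^*:L^*_{\mathbb{Q}}\to D^\dagger$ the dual of $\beta$. $D_+^\dagger=\{\varrho\in D^\dagger:\langle\varrho,e^\delta\rangle\ge0\ \forall\delta\}$, with interior given by strict inequalities. For $\delta\in\Lambda^{(0)}$, $\mathfrak{s}^\perp_\delta$ is the unique simplex of $\Lambda$ whose relative interior contains $-\delta$. For $\mathfrak{s}\in\Lambda^{(n-1)}$ and $\delta'\in\Lambda^{(0)}\setminus\mathfrak{s}$ define $n^{\delta'}_{\mathfrak{s}}=e^{\delta'}+\sum_{\delta\in\mathfrak{s}}n^{\delta'}_{\delta,\mathfrak{s}}e^\delta\in\mathbf{n}_\Delta\otimes\mathbb{Q}$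 where the rationals $n^{\delta'}_{\delta,\mathfrak{s}}$ are determined by $\delta'+\sum_{\delta\in\mathfrak{s}}n^{\delta'}_{\delta,\mathfrak{s}}\delta=0$ in $L_{\mathbb{Q}}$. Let $\mathbf{n}_{\Lambda,+}=\sum_{\mathfrak{s},\delta'}\mathbb{Q}_{\ge0}n^{\delta'}_{\mathfrak{s}}\subseteq\mathbf{n}_\Delta\otimes\mathbb{Q}$, $\mathbf{n}^\dagger_{\Lambda,+}$ its dual cone in $\mathbf{n}_\Delta^\dagger\otimes\mathbb{Q}$, and $\widehat{\mathbf{n}}_{\Lambda,+}(D^\dagger)=\{\varrho\in D^\dagger:\langle\varrho,n\rangle\ge0\ \forall n\in\mathbf{n}_{\Lambda,+}\}$. For $\varrho\in D^\dagger$ and $\mathfrak{s}\in\Lambda^{(n-1)}$, let $\varrho'_{\mathfrak{s}}$ be the unique element of $\beta^*(L^*_{\mathbb{Q}})$ with $\langle\varrho'_{\mathfrak{s}},e^\delta\rangle=\langle\varrho,e^\delta\rangle$ for all $\delta\in\mathfrak{s}$, and $\varrho_{\mathfrak{s}}=\varrho-\varrho'_{\mathfrak{s}}$. The positive cone is $C_+^\dagger=\{\varrho\in D^\dagger:\langle\varrho_{\mathfrak{s}},e^{\delta'}\rangle\ge0\text{ for all }\mathfrak{s}\in\Lambda^{(n-1)},\ \delta'\in\Lambda^{(0)}\setminus\mathfrak{s}\}$. *)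

(* L = Z^n inside L_Q = Q^n, realised as row vectors 'rV[rat]_n. *)
From HB Require Import structures.
From mathcomp Require Import all_boot all_order all_algebra.
Set Implicit Arguments. Unset Strict Implicit. Unset Printing Implicit Defensive.
Import Order.TTheory GRing.Theory Num.Theory.
Local Open Scope ring_scope.

Section Reflexive.
Variable n : nat.

(* the pairing L*_Q x L_Q -> Q *)
Definition dot (u x : 'rV[rat]_n) : rat := \sum_(k < n) u 0 k * x 0 k.

Definition integral_vec (x : 'rV[rat]_n) : Prop := forall k, x 0 k \is a Num.int.

Definition conv_hull (V : seq 'rV[rat]_n) (x : 'rV[rat]_n) : Prop :=
  exists lam : 'I_(size V) -> rat,
    [/\ forall j, 0 <= lam j, \sum_j lam j = 1 & x = \sum_j lam j *: V`_j].

(* Delta is given by its facet normals U (= vertices of the dual polytope):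
   Delta = { x | <u,x> >= -1 for all u in U }. *)
Variable U : seq 'rV[rat]_n.

Definition in_polytope (x : 'rV[rat]_n) : Prop := forall u, u \in U -> -1 <= dot u x.

Definition on_boundary (x : 'rV[rat]_n) : Prop :=
  in_polytope x /\ exists2 u, u \in U & dot u x = -1.

Definition in_facet_relint (x : 'rV[rat]_n) : Prop :=
  in_polytope x /\
  exists2 u, u \in U & dot u x = -1 /\ (forall u', u' \in U -> u' != u -> -1 < dot u' x).

(* (Delta, L) is reflexive, U being the irredundant list of facet normals:
   U consists of lattice points of L*, Delta is a lattice polytope (the convex
   hull of finitely many lattice points), and every u in U defines a facet. *)
Definition is_reflexive : Prop :=
  [/\ forall u, u \in U -> integral_vec u,
      uniq U,
      exists V : seq 'rV[rat]_n,
        (forall v, v \in V -> integral_vec v) /\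
        (forall x, in_polytope x <-> conv_hull V x)
    & forall u, u \in U -> exists x,
        dot u x < -1 /\ (forall u', u' \in U -> u' != u -> -1 <= dot u' x)].

(* The vertex set Lambda^(0) is indexed by a finite type I via vert. *)
Variables (I : finType) (vert : I -> 'rV[rat]_n).

Definition is_vertex_set : Prop :=
  injective vert /\
  forall x, (exists i, vert i = x) <->
            [/\ integral_vec x, on_boundary x & ~ in_facet_relint x].

Definition generates_lattice : Prop :=
  forall x, integral_vec x -> exists c : I -> int, x = \sum_i (c i)%:~R *: vert i.

Definition simplex_hull (s : {set I}) (x : 'rV[rat]_n) : Prop :=
  exists lam : I -> rat,
    [/\ forall i, 0 <= lam i, forall i, i \notin s -> lam i = 0,
        \sum_i lam i = 1 & x = \sum_i lam i *: vert i].

Definition aff_indep (s : {set I}) : Prop :=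
  forall lam : I -> rat, (forall i, i \notin s -> lam i = 0) ->
    \sum_i lam i = 0 -> \sum_i lam i *: vert i = 0 -> forall i, lam i = 0.

Definition cone_relint (s : {set I}) (x : 'rV[rat]_n) : Prop :=
  exists lam : I -> rat, (forall i, i \in s -> 0 < lam i) /\
    x = \sum_(i in s) lam i *: vert i.

Variable Lam : {set {set I}}.

Definition simplicial_decomp : Prop :=
  [/\ forall i, [set i] \in Lam,
      forall s t : {set I}, s \in Lam -> t \subset s -> t != set0 -> t \in Lam,
      forall s, s \in Lam -> aff_indep s,
      forall x, (exists2 s, s \in Lam & simplex_hull s x) <-> on_boundary x
    & forall (s t : {set I}) x, s \in Lam -> t \in Lam -> simplex_hull s x -> simplex_hull t x ->
        simplex_hull (s :&: t) x].

(* D (x) Q and D^dagger, both realised as {ffun I -> rat} *)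
Local Notation Dvec := {ffun I -> rat}.

Definition pair (rho c : Dvec) : rat := \sum_i rho i * c i.

Definition beta (c : Dvec) : 'rV[rat]_n := \sum_i c i *: vert i.

(* n_Delta (x) Q = ker beta *)
Definition in_kernel (c : Dvec) : Prop := beta c = 0.

Definition top_simplex (s : {set I}) : Prop := s \in Lam /\ #|s| = n.

Definition is_nvec (s : {set I}) (d' : I) (c : Dvec) : Prop :=
  [/\ c d' = 1, forall i, i != d' -> i \notin s -> c i = 0 & beta c = 0].

Definition nLam_gen (c : Dvec) : Prop :=
  exists s d', [/\ top_simplex s, d' \notin s & is_nvec s d' c].

Definition nLam_cone (x : Dvec) : Prop :=
  exists (m : nat) (lam : 'I_m -> rat) (g : 'I_m -> Dvec),
    (forall j, 0 <= lam j /\ nLam_gen (g j)) /\ x = [ffun i => \sum_j lam j * g j i].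

Definition hat_nLam (rho : Dvec) : Prop := forall x, nLam_cone x -> 0 <= pair rho x.

(* C_+^dagger ; rho'_s = beta^* y with y determined by agreement on s *)
Definition C_plus (rho : Dvec) : Prop :=
  forall s, top_simplex s -> forall d', d' \notin s ->
    forall y : 'rV[rat]_n, (forall i, i \in s -> dot y (vert i) = rho i) ->
      0 <= rho d' - dot y (vert d').

Definition D_plus (rho : Dvec) : Prop := forall i, 0 <= rho i.
Definition D_plus_int (rho : Dvec) : Prop := forall i, 0 < rho i.

Definition interior_D (S : Dvec -> Prop) (rho : Dvec) : Prop :=
  exists2 eps : rat, 0 < eps &
    forall rho' : Dvec, (forall i, `|rho' i - rho i| <= eps) -> S rho'.

Definition perp_not_sub (s : {set I}) (d' : I) : Prop :=
  exists t : {set I}, [/\ t \in Lam, cone_relint t (- vert d') & ~~ (t \subset s)].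

(* n_Delta^dagger (x) Q : Q-linear functionals on ker beta, represented by
   functions Dvec -> rat of which only the restriction to ker beta matters. *)
Definition linear_on_K (phi : Dvec -> rat) : Prop :=
  forall (a b : rat) (x y : Dvec), in_kernel x -> in_kernel y ->
    phi [ffun i => a * x i + b * y i] = a * phi x + b * phi y.

Definition iota_star_image (S : Dvec -> Prop) (phi : Dvec -> rat) : Prop :=
  exists2 rho, S rho & forall k, in_kernel k -> phi k = pair rho k.

Definition ndag_plus (phi : Dvec -> rat) : Prop := forall x, nLam_cone x -> 0 <= phi x.

(* topological interior in n_Delta^dagger (x) Q, w.r.t. the operator norm dual
   to the sup norm on ker beta *)
Definition interior_ndag (S : (Dvec -> rat) -> Prop) (phi : Dvec -> rat) : Prop :=
  exists2 eps : rat, 0 < eps &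
    forall psi : Dvec -> rat, linear_on_K psi ->
      (forall k : Dvec, in_kernel k -> (forall i, `|k i| <= 1) -> `|psi k - phi k| <= eps) ->
      S psi.

End Reflexive.

(* For a top-dimensional simplex [s] of [Lambda], the vertices of [s] lie on a common facet
   [<u,.> = -1] of [Delta] and are affinely independent, hence form a basis of [L_Q]. So
   [rho'_s] exists, [n^d'_s] is unique and [<rho_s, e^d'> = <rho, n^d'_s>]: [C_+] is the dual
   of the cone [n_{Lambda,+}], which is (I), and as there are finitely many generators its
   interior is where all pairings [<rho, n^d'_s>] are positive.
   When [s^perp_d'] is a face of [s], [-d'] is a nonnegative combination of the vertices of
   [s], so [n^d'_s >= 0] and its inequality holds automatically on [D_+]; this gives (II).
   For the images under [iota^*]: a top simplex exists, since every nonzero vector lies in the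
   cone over some simplex while finitely many proper subspaces cannot cover [Q^n]. A functional
   [phi] on [ker beta] is represented by the [rho] vanishing on [s] with [rho d' = phi n^d'_s],
   which lies in [D_+] (in [Int D_+] after a small perturbation by some [beta^* y]) as soon as
   [phi] is nonnegative (positive) on the generators. *)

From mathcomp Require Import all_boot all_order all_algebra.
From mathcomp Require Import ring lra.
From Stdlib Require Import Classical.
Set Implicit Arguments. Unset Strict Implicit. Unset Printing Implicit Defensive.
Import Order.TTheory GRing.Theory Num.Theory.
Local Open Scope ring_scope.

Section Pairings.
Variables (n : nat) (I : finType) (vert : I -> 'rV[rat]_n).
Local Notation Dvec := {ffun I -> rat}.

Lemma dot0 (u : 'rV[rat]_n) : dot u 0 = 0.
Proof. by rewrite /dot big1 // => k _; rewrite mxE mulr0. Qed.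

Lemma dotD (u x y : 'rV[rat]_n) : dot u (x + y) = dot u x + dot u y.
Proof. by rewrite /dot -big_split; apply: eq_bigr => k _; rewrite mxE mulrDr. Qed.

Lemma dotZ (u x : 'rV[rat]_n) (a : rat) : dot u (a *: x) = a * dot u x.
Proof. by rewrite /dot big_distrr; apply: eq_bigr => k _; rewrite mxE mulrCA. Qed.

Lemma dot_sum (J : Type) (r : seq J) (P : pred J) (u : 'rV[rat]_n) (a : J -> rat)
    (v : J -> 'rV[rat]_n) :
  dot u (\sum_(j <- r | P j) a j *: v j) = \sum_(j <- r | P j) a j * dot u (v j).
Proof.
rewrite (big_morph (dot u) (dotD u) (dot0 u)).
by apply: eq_bigr => j _; rewrite dotZ.
Qed.

Lemma dot_self_gt0 (w : 'rV[rat]_n) : w != 0 -> 0 < dot w w.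
Proof.
move=> w0; have sq_ge0 k : 0 <= w 0 k * w 0 k by rewrite -expr2 sqr_ge0.
rewrite lt_def sumr_ge0 ?andbT //; apply: contra w0 => /eqP sum0.
apply/eqP/rowP => k; rewrite mxE; apply/eqP.
by rewrite -sqrf_eq0 expr2 (psumr_eq0P (fun k _ => sq_ge0 k) sum0).
Qed.

Lemma beta_comb (J : Type) (r : seq J) (a : J -> rat) (g : J -> Dvec) :
  beta vert [ffun i => \sum_(j <- r) a j * g j i] = \sum_(j <- r) a j *: beta vert (g j).
Proof.
rewrite /beta; under eq_bigr => i _ do rewrite ffunE scaler_suml.
rewrite exchange_big /=; apply: eq_bigr => j _.
by rewrite scaler_sumr; apply: eq_bigr => i _; rewrite scalerA.
Qed.

Lemma kernel_comb (J : Type) (r : seq J) (a : J -> rat) (g : J -> Dvec) :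
  (forall j, in_kernel vert (g j)) -> in_kernel vert [ffun i => \sum_(j <- r) a j * g j i].
Proof. by move=> kg; rewrite /in_kernel beta_comb big1 // => j _; rewrite kg scaler0. Qed.

Lemma kernelZ (a : rat) (c : Dvec) :
  in_kernel vert c -> in_kernel vert [ffun i => a * c i].
Proof.
rewrite /in_kernel /beta => kc; under eq_bigr do rewrite ffunE -scalerA.
by rewrite -scaler_sumr kc scaler0.
Qed.

Lemma kernel0 : in_kernel vert [ffun => 0].
Proof. by rewrite /in_kernel /beta big1 // => i _; rewrite ffunE scale0r. Qed.

Lemma pair_linK (rho : Dvec) : linear_on_K vert (pair rho).
Proof.
move=> a b x y _ _; rewrite /pair !big_distrr -big_split /=.
by apply: eq_bigr => i _; rewrite ffunE; ring.
Qed.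

Lemma pair_beta_dual (y : 'rV[rat]_n) (c : Dvec) :
  pair [ffun i => dot y (vert i)] c = dot y (beta vert c).
Proof. by rewrite /beta dot_sum; apply: eq_bigr => i _; rewrite ffunE mulrC. Qed.

Section LinearOnKernel.
Variable phi : Dvec -> rat.
Hypothesis lin : linear_on_K vert phi.

Lemma linKZ (a : rat) (x : Dvec) : in_kernel vert x -> phi [ffun i => a * x i] = a * phi x.
Proof.
move=> kx; have -> : [ffun i => a * x i] = [ffun i => a * x i + 0 * x i].
  by apply/ffunP => i; rewrite !ffunE mul0r addr0.
by rewrite lin //; ring.
Qed.

Lemma linK0 : phi [ffun => 0] = 0.
Proof.
have -> : [ffun => 0] = [ffun i => 0 * ([ffun => 0] : Dvec) i].
  by apply/ffunP => i; rewrite !ffunE mul0r.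
by rewrite (linKZ 0 kernel0) mul0r.
Qed.

Lemma linK_sum (J : Type) (r : seq J) (a : J -> rat) (g : J -> Dvec) :
  (forall j, in_kernel vert (g j)) ->
  phi [ffun i => \sum_(j <- r) a j * g j i] = \sum_(j <- r) a j * phi (g j).
Proof.
move=> kg; elim: r => [|j r IH].
  have -> : [ffun i => \sum_(j <- [::]) a j * g j i] = [ffun => 0].
    by apply/ffunP => i; rewrite !ffunE big_nil.
  by rewrite linK0 big_nil.
have kr := kernel_comb r a kg.
have -> : [ffun i => \sum_(j0 <- j :: r) a j0 * g j0 i] =
          [ffun i => a j * g j i + 1 * [ffun i => \sum_(j <- r) a j * g j i] i].
  by apply/ffunP => i; rewrite !ffunE big_cons mul1r.
by rewrite lin // IH big_cons mul1r.
Qed.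

Lemma linK_void (rho : Dvec) : (I -> False) -> forall k, in_kernel vert k -> phi k = pair rho k.
Proof.
move=> void k _; rewrite /pair big1 => [|i]; last by case: (void i).
have -> : k = [ffun => 0] by apply/ffunP => i; case: (void i).
exact: linK0.
Qed.

End LinearOnKernel.

Definition norm1 (c : Dvec) : rat := \sum_i `|c i|.

Lemma norm1_ge_coord (c : Dvec) i : `|c i| <= norm1 c.
Proof. by rewrite /norm1 (bigD1 i) //= lerDl sumr_ge0. Qed.

Lemma pair_perturb (rho rho' c : Dvec) (e : rat) : (forall i, `|rho' i - rho i| <= e) ->
  pair rho c - e * norm1 c <= pair rho' c.
Proof.
move=> near; have -> : pair rho' c = pair rho c + \sum_i (rho' i - rho i) * c i.
  by rewrite /pair -big_split /=; apply: eq_bigr => i _; ring.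
rewrite lerD2l /norm1 mulr_sumr -sumrN; apply: ler_sum => i _.
have := ler_wpM2r (normr_ge0 (c i)) (near i).
have : - `|(rho' i - rho i) * c i| <= (rho' i - rho i) * c i.
  by have := lexx `|(rho' i - rho i) * c i|; rewrite ler_norml => /andP [].
by rewrite normrM; lra.
Qed.

(* The kernel is normed by the sup norm, whose unit ball contains [c / norm1 c]. *)
Lemma linK_perturb (phi psi : Dvec -> rat) (e : rat) (c : Dvec) :
  linear_on_K vert phi -> linear_on_K vert psi -> in_kernel vert c -> 0 < norm1 c ->
  (forall k, in_kernel vert k -> (forall i, `|k i| <= 1) -> `|psi k - phi k| <= e) ->
  phi c - e * norm1 c <= psi c.
Proof.
move=> lin_phi lin_psi kc norm_gt0 near; set M := norm1 c.
pose k : Dvec := [ffun i => M^-1 * c i].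
have kk : in_kernel vert k by exact: kernelZ.
have k_le1 i : `|k i| <= 1.
  rewrite ffunE normrM normfV (gtr0_norm norm_gt0) mulrC ler_pdivrMr // mul1r.
  exact: norm1_ge_coord.
have def_c : c = [ffun i => M * k i].
  by apply/ffunP => i; rewrite !ffunE mulrA divff ?mul1r // gt_eqF.
have := near k kk k_le1; rewrite ler_norml => /andP [near_k _].
have phi_k : M * phi k = phi c by rewrite (linKZ lin_phi _ kc) mulrA divff ?gt_eqF // mul1r.
have psi_k : psi c = M * psi k by rewrite {1}def_c (linKZ lin_psi _ kk).
rewrite psi_k -phi_k.
have : M * - e <= M * (psi k - phi k) by rewrite ler_pM2l.
rewrite mulrN mulrBr; lra.
Qed.

Lemma pair_ge_coord (rho c : Dvec) i : (forall j, 0 <= rho j) -> (forall j, 0 <= c j) ->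
  rho i * c i <= pair rho c.
Proof.
by move=> rho_ge0 c_ge0; rewrite /pair (bigD1 i) //= lerDl sumr_ge0 // => j _; apply: mulr_ge0.
Qed.

End Pairings.

Lemma exists_pos_lower_bound (T : finType) (f : T -> rat) :
  (forall t, 0 < f t) -> exists2 e, 0 < e & forall t, e <= f t.
Proof.
move=> f_gt0; pose S := \sum_t (f t)^-1.
have S_ge0 : 0 <= S by apply: sumr_ge0 => t _; rewrite invr_ge0 ltW.
exists (1 + S)^-1 => [|t]; first by rewrite invr_gt0 ltr_pwDl.
rewrite -[f t]invrK lef_pV2 ?posrE ?invr_gt0 //; last by lra.
have : 0 <= \sum_(t' | t' != t) (f t')^-1 by apply: sumr_ge0 => t' _; rewrite invr_ge0 ltW.
by move=> rest_ge0; rewrite /S (bigD1 t) //=; lra.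
Qed.

Lemma exists_seq_max (T : eqType) (s : seq T) (f : T -> rat) x0 : x0 \in s ->
  exists2 x, x \in s & forall y, y \in s -> f y <= f x.
Proof.
elim: s x0 => // a s IH x0 _; case: s IH => [|b s'] IH.
  by exists a; rewrite ?inE // => y; rewrite inE => /eqP ->.
have [x xs hx] := IH b (mem_head b s').
have [le_ax|lt_xa] := leP (f a) (f x).
  exists x; first by rewrite inE xs orbT.
  by move=> y; rewrite inE => /orP [/eqP ->|/hx].
exists a; first by rewrite inE eqxx.
by move=> y; rewrite inE => /orP [/eqP ->//|/hx le_yx]; rewrite (le_trans le_yx) ?ltW.
Qed.

Lemma poly_nonroot (p : {poly rat}) : p != 0 -> exists x, ~~ root p x.
Proof.
move=> p0; pose xs := [seq (i%:R : rat) | i <- iota 0 (size p)].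
have uniq_xs : uniq xs.
  by rewrite map_inj_uniq ?iota_uniq // => a b /eqP; rewrite eqr_nat => /eqP.
have : ~~ all (root p) xs.
  apply/negP => all_roots; have := max_poly_roots p0 all_roots uniq_xs.
  by rewrite size_map size_iota ltnn.
by case/allPn => x _; exists x.
Qed.

(* Finitely many hyperplanes do not cover [Q^n]: a point of the moment curve
   [(1, x, ..., x^(n-1))] avoids them all, since each gives a nonzero polynomial in [x]. *)
Lemma exists_vec_avoiding (n : nat) (J : finType) (P : pred J) (F : J -> 'rV[rat]_n) :
  (forall j, P j -> F j != 0) -> exists w, forall j, P j -> dot (F j) w != 0.
Proof.
move=> F_neq0; pose p j : {poly rat} := \sum_(k < n) F j 0 k *: 'X^k.
have p_neq0 j : P j -> p j != 0.
  move=> Pj; apply: contra (F_neq0 j Pj) => /eqP pj0; apply/eqP/rowP => k.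
  have := congr1 (fun q : {poly rat} => q`_k) pj0.
  rewrite coef_sum (bigD1 k) //= big1 => [|k' neq_k'k]; last first.
    by rewrite coefZ coefXn val_eqE eq_sym (negbTE neq_k'k) mulr0.
  by rewrite coefZ coefXn eqxx mulr1 addr0 coef0 mxE.
have prod_neq0 : \prod_(j | P j) p j != 0 by apply/prodf_neq0.
have [x] := poly_nonroot prod_neq0.
rewrite /root horner_prod prodf_seq_neq0 => /allP nonzero.
exists (\row_(k < n) x ^+ k) => j Pj; have := nonzero j (mem_index_enum j).
rewrite Pj /= /p horner_sum; congr (~~ (_ == _)).
by apply: eq_bigr => k _; rewrite hornerZ hornerXn mxE.
Qed.

Section SimplexMatrix.
Variables (n : nat) (I : finType) (vert : I -> 'rV[rat]_n) (s : {set I}).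

Definition simplex_mx : 'M[rat]_(#|s|, n) :=
  \matrix_(k < #|s|, j < n) vert (enum_val k) 0 j.

(* [row_coef v i] is the coefficient of [vert i] in the row combination [v *m simplex_mx]. *)
Definition row_coef (v : 'rV[rat]_#|s|) (i : I) : rat := \sum_(k | enum_val k == i) v 0 k.

Lemma row_coef_out (v : 'rV_#|s|) i : i \notin s -> row_coef v i = 0.
Proof.
move=> iNs; rewrite /row_coef big_pred0 // => k.
by apply/negbTE; apply: contra iNs => /eqP <-; exact: enum_valP.
Qed.

Lemma row_coef_enum_val (v : 'rV_#|s|) k : row_coef v (enum_val k) = v 0 k.
Proof. by rewrite /row_coef (big_pred1 k) // => k'; rewrite (inj_eq enum_val_inj). Qed.

Lemma row_simplex_mx k : row k simplex_mx = vert (enum_val k).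
Proof. by apply/rowP => j; rewrite !mxE. Qed.

Lemma mul_simplex_mx (v : 'rV_#|s|) : v *m simplex_mx = \sum_i row_coef v i *: vert i.
Proof.
rewrite mulmx_sum_row; under eq_bigr do rewrite row_simplex_mx.
rewrite /row_coef; under [RHS]eq_bigr => i _ do rewrite scaler_suml.
rewrite (partition_big (@enum_val _ (mem s)) predT) //=.
by apply: eq_bigr => i _; apply: eq_bigr => k /eqP <-.
Qed.

Lemma mul_tr_simplex_mx (y : 'rV[rat]_n) i (i_s : i \in s) :
  (y *m simplex_mx^T) 0 (enum_rank_in i_s i) = dot y (vert i).
Proof. by rewrite !mxE; apply: eq_bigr => j _; rewrite !mxE enum_rankK_in. Qed.

Lemma simplex_mx_free :
  (forall a : I -> rat, (forall i, i \notin s -> a i = 0) ->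
     \sum_i a i *: vert i = 0 -> forall i, a i = 0) ->
  row_free simplex_mx.
Proof.
move=> indep; rewrite -kermx_eq0; apply/rowV0Pn => -[v /sub_kermxP v_ker v_neq0].
apply/negP: v_neq0; rewrite negbK; apply/eqP/rowP => k.
rewrite mxE -row_coef_enum_val; apply: indep (@row_coef_out v) _ _.
by rewrite -mul_simplex_mx.
Qed.

End SimplexMatrix.

Section Decomposition.
Variables (n : nat) (U : seq 'rV[rat]_n) (I : finType) (vert : I -> 'rV[rat]_n).
Variable Lam : {set {set I}}.
Hypothesis Hrefl : is_reflexive U.
Hypothesis Hvert : is_vertex_set U vert.
Hypothesis Hsd : simplicial_decomp U vert Lam.
Local Notation Dvec := {ffun I -> rat}.

Lemma vert_on_boundary i : on_boundary U (vert i).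
Proof. by case: Hvert => _ /(_ (vert i)) [/(_ (ex_intro _ i erefl)) []]. Qed.

(* The barycentre of [s] lies on some facet [<u,.> = -1]; as all vertices satisfy
   [<u,.> >= -1], each vertex of [s] lies on that facet too. *)
Lemma simplex_on_facet (s : {set I}) : s \in Lam -> s != set0 ->
  exists2 u, u \in U & forall i, i \in s -> dot u (vert i) = -1.
Proof.
move=> sL s_neq0; have s_gt0 : (0 < #|s|)%N by rewrite card_gt0.
pose lam i : rat := if i \in s then (#|s|%:R)^-1 else 0.
have lam_ge0 i : 0 <= lam i by rewrite /lam; case: ifP; rewrite ?invr_ge0 ?ler0n.
have lam_sum1 : \sum_i lam i = 1.
  by rewrite /lam -big_mkcond /= sumr_const -[_ *+ _]mulr_natr mulVf // pnatr_eq0 -lt0n.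
case: Hsd => _ _ _ cover _.
have [_ [u uU hu]] : on_boundary U (\sum_i lam i *: vert i).
  by apply/cover; exists s => //; exists lam; split=> // i /negbTE; rewrite /lam => ->.
exists u => // i i_s.
have gap_ge0 j : 0 <= lam j * (dot u (vert j) + 1).
  rewrite mulr_ge0 // -lerBlDr sub0r; by case: (vert_on_boundary j) => /(_ u uU).
have : \sum_j lam j * (dot u (vert j) + 1) = 0.
  under eq_bigr => j _ do rewrite mulrDr mulr1.
  by rewrite big_split /= lam_sum1 -dot_sum hu addNr.
move=> /(psumr_eq0P (fun j _ => gap_ge0 j)) /(_ i isT) /eqP.
rewrite mulf_eq0 /lam i_s invr_eq0 pnatr_eq0 (gtn_eqF s_gt0) addr_eq0 => /eqP //.
Qed.

(* Affine independence plus the facet equation [<u,.> = -1] give linear independence. *)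
Lemma simplex_free (s : {set I}) : s \in Lam ->
  forall a : I -> rat, (forall i, i \notin s -> a i = 0) ->
  \sum_i a i *: vert i = 0 -> forall i, a i = 0.
Proof.
move=> sL a a_out comb0; case: Hsd => _ _ aff _ _.
have [s0|s_neq0] := eqVneq s set0; first by move=> i; apply: a_out; rewrite s0 in_set0.
have [u uU hu] := simplex_on_facet sL s_neq0.
apply: (aff s sL a a_out) => //; apply/eqP; rewrite -oppr_eq0.
have <- : \sum_i a i * dot u (vert i) = - \sum_i a i.
  rewrite -sumrN; apply: eq_bigr => i _.
  by case: (boolP (i \in s)) => [/hu -> | /a_out ->]; rewrite ?mulrN1 ?mul0r ?oppr0.
by rewrite -dot_sum comb0 dot0.
Qed.

Lemma rank_simplex_mx (s : {set I}) : s \in Lam -> \rank (simplex_mx vert s) = #|s|.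
Proof. by move=> sL; apply/eqP/simplex_mx_free/simplex_free. Qed.

Lemma top_simplex_span (s : {set I}) : top_simplex n Lam s -> forall x : 'rV[rat]_n,
  exists a : I -> rat, (forall i, i \notin s -> a i = 0) /\ x = \sum_i a i *: vert i.
Proof.
move=> [sL cs] x; have full : row_full (simplex_mx vert s).
  by rewrite /row_full rank_simplex_mx // cs.
have /submxP [v ->] := submx_full x full.
by exists (row_coef v); split; [exact: row_coef_out | exact: mul_simplex_mx].
Qed.

Lemma top_simplex_solve (s : {set I}) : top_simplex n Lam s -> forall r : I -> rat,
  exists y : 'rV[rat]_n, forall i, i \in s -> dot y (vert i) = r i.
Proof.
move=> [sL cs] r; have full : row_full (simplex_mx vert s)^T.
  by rewrite /row_full mxrank_tr rank_simplex_mx // cs.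
have /submxP [y hy] := submx_full (\row_k r (enum_val k)) full.
by exists y => i i_s; rewrite -(mul_tr_simplex_mx vert y i_s) -hy mxE enum_rankK_in.
Qed.

Lemma simplex_normal_exists (s : {set I}) : s \in Lam -> (#|s| < n)%N ->
  exists2 f : 'rV[rat]_n, f != 0 & forall i, i \in s -> dot f (vert i) = 0.
Proof.
move=> sL small.
have : kermx (simplex_mx vert s)^T != 0.
  by rewrite kermx_eq0 /row_free mxrank_tr rank_simplex_mx // neq_ltn small.
case/rowV0Pn => f /sub_kermxP f_ker f_neq0; exists f => // i i_s.
by rewrite -(mul_tr_simplex_mx vert f i_s) f_ker mxE.
Qed.

Lemma nvec_of_comb (s : {set I}) d' (a : I -> rat) :
  d' \notin s -> (forall i, i \notin s -> a i = 0) -> \sum_i a i *: vert i = - vert d' ->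
  is_nvec vert s d' [ffun i => a i + (i == d')%:R].
Proof.
move=> d'_s a_out def_a; split=> [|i /negbTE neq_id' i_s|].
- by rewrite ffunE a_out // eqxx add0r.
- by rewrite ffunE a_out // neq_id' add0r.
- rewrite /beta; under eq_bigr => i _ do rewrite ffunE scalerDl.
  rewrite big_split /= def_a (bigD1 d') //= eqxx scale1r big1 ?addr0 ?addNr //.
  by move=> i /negbTE ->; rewrite scale0r.
Qed.

Lemma nvec_exists s d' : top_simplex n Lam s -> d' \notin s -> exists c, is_nvec vert s d' c.
Proof.
move=> top_s d'_s; have [a [a_out def_a]] := top_simplex_span top_s (- vert d').
by exists [ffun i => a i + (i == d')%:R]; apply: nvec_of_comb; rewrite -?def_a.
Qed.

Lemma nvec_unique s d' c1 c2 : s \in Lam ->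
  is_nvec vert s d' c1 -> is_nvec vert s d' c2 -> c1 = c2.
Proof.
move=> sL [c1d' c1_out beta_c1] [c2d' c2_out beta_c2].
apply/ffunP => i; apply/eqP; rewrite -subr_eq0; apply/eqP.
apply: (simplex_free sL (a := fun i => c1 i - c2 i)).
- move=> j j_s; have [->|neq_jd'] := eqVneq j d'; first by rewrite c1d' c2d' subrr.
  by rewrite c1_out // c2_out // subrr.
- under eq_bigr => j _ do rewrite scalerBl.
  by rewrite sumrB -/(beta vert c1) -/(beta vert c2) beta_c1 beta_c2 subrr.
Qed.

(* [pair rho c] is the pairing [<rho_s, e^d'>] of the paper, [y] standing for [rho'_s]. *)
Lemma pair_nvec s d' c (rho : Dvec) (y : 'rV[rat]_n) : is_nvec vert s d' c ->
  (forall i, i \in s -> dot y (vert i) = rho i) -> pair rho c = rho d' - dot y (vert d').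
Proof.
move=> [cd' c_out beta_c] hy.
have -> : pair rho c = pair [ffun i => rho i - dot y (vert i)] c +
                       pair [ffun i => dot y (vert i)] c.
  by rewrite /pair -big_split /=; apply: eq_bigr => i _; rewrite !ffunE; ring.
rewrite pair_beta_dual beta_c dot0 addr0 /pair (bigD1 d') //= big1.
  by rewrite ffunE cd' mulr1 addr0.
move=> i neq_id'; case: (boolP (i \in s)) => i_s; last by rewrite c_out // mulr0.
by rewrite ffunE hy // subrr mul0r.
Qed.

Definition nonneg_on_gens (F : Dvec -> rat) : Prop :=
  forall c, nLam_gen vert Lam c -> 0 <= F c.

Definition pos_on_gens (F : Dvec -> rat) : Prop :=
  forall c, nLam_gen vert Lam c -> 0 < F c.

Lemma C_plus_gensE rho : C_plus vert Lam rho <-> nonneg_on_gens (pair rho).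
Proof.
split=> [Cplus c [s [d' [top_s d'_s c_nvec]]] | gens_ge0 s top_s d' d'_s y hy].
- have [y hy] := top_simplex_solve top_s rho.
  by rewrite (pair_nvec c_nvec hy); exact: Cplus s top_s d' d'_s y hy.
- have [c c_nvec] := nvec_exists top_s d'_s.
  by rewrite -(pair_nvec c_nvec hy); apply: gens_ge0; exists s, d'.
Qed.

Lemma gen_kernel c : nLam_gen vert Lam c -> in_kernel vert c.
Proof. by case=> s [d' [_ _ []]]. Qed.

Lemma gen_cone c : nLam_gen vert Lam c -> nLam_cone vert Lam c.
Proof.
move=> c_gen; exists 1%N, (fun _ => 1), (fun _ => c); split=> //.
by apply/ffunP => i; rewrite ffunE big_ord1 mul1r.
Qed.

Lemma ndag_plus_gensE phi : linear_on_K vert phi ->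
  ndag_plus vert Lam phi <-> nonneg_on_gens phi.
Proof.
move=> lin; split=> [ndag c /gen_cone | gens_ge0 x [m [lam [g [hg ->]]]]]; first exact: ndag.
rewrite (linK_sum lin) => [|j]; last exact: gen_kernel (hg j).2.
by apply: sumr_ge0 => j _; have [lam_ge0 /gens_ge0] := hg j; apply: mulr_ge0.
Qed.

Lemma C_plus_hatE rho : C_plus vert Lam rho <-> hat_nLam vert Lam rho.
Proof.
apply: iff_trans (C_plus_gensE rho) _; apply: iff_sym.
exact: ndag_plus_gensE (pair_linK rho).
Qed.

Lemma nvec_norm1_gt0 s d' c : is_nvec vert s d' c -> 0 < norm1 c.
Proof. by case=> cd' _ _; apply: lt_le_trans (norm1_ge_coord c d'); rewrite cd' normr1. Qed.

(* Up to the uniqueness of [n^d'_s], there are finitely many generators. *)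
Lemma gens_lower_bound (F : Dvec -> rat) : pos_on_gens F ->
  exists2 e, 0 < e & forall c, nLam_gen vert Lam c -> e * norm1 c <= F c.
Proof.
move=> F_gt0; pose valid (t : {set I} * I) := [&& t.1 \in Lam, #|t.1| == n & t.2 \notin t.1].
have [G G_nvec] : exists G : {set I} * I -> Dvec,
    forall t, valid t -> is_nvec vert t.1 t.2 (G t).
  apply: (@fin_all_exists _ (fun=> Dvec) (fun t c => valid t -> is_nvec vert t.1 t.2 c)).
  move=> [s d'].
  have [/and3P [sL /eqP cs d'_s]|_] := boolP (valid (s, d')); last by exists 0.
  by have [c c_nvec] := nvec_exists (conj sL cs) d'_s; exists c.
pose f t := if valid t then F (G t) / norm1 (G t) else 1.
have [|e e_gt0 e_le] := @exists_pos_lower_bound _ f.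
  move=> [s d']; rewrite /f; case: ifP => // /[dup] /and3P [sL /eqP cs d'_s] vt.
  apply: divr_gt0; last exact: nvec_norm1_gt0 (G_nvec _ vt).
  by apply: F_gt0; exists s, d'; split => //; exact: G_nvec.
exists e => // c [s [d' [[sL cs] d'_s c_nvec]]].
have vt : valid (s, d') by apply/and3P; split => //; apply/eqP.
have := e_le (s, d'); rewrite /f vt (nvec_unique sL (G_nvec _ vt) c_nvec).
by rewrite ler_pdivlMr // (nvec_norm1_gt0 c_nvec).
Qed.

Lemma interior_C_plus_gensE rho :
  interior_D (C_plus vert Lam) rho <-> pos_on_gens (pair rho).
Proof.
split=> [[e e_gt0 near] c c_gen | /gens_lower_bound [e e_gt0 e_le]].
- have [s [d' [_ _ [cd' _ _]]]] := c_gen.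
  pose rho' : Dvec := [ffun i => rho i - e * (i == d')%:R].
  have /C_plus_gensE /(_ c c_gen) : C_plus vert Lam rho'.
    apply: near => i; rewrite ffunE addrAC subrr add0r normrN normrM gtr0_norm //.
    by rewrite normr_nat; case: (i == d') => /=; rewrite ?mulr1 ?mulr0 // ltW.
  have -> : pair rho' c = pair rho c - e.
    rewrite /pair (bigD1 d') //= [in RHS](bigD1 d') //= !ffunE eqxx cd'.
    rewrite (eq_bigr (fun i => rho i * c i)) => [|i /negbTE neq_id'].
      by rewrite /= !mulr1; ring.
    by rewrite ffunE neq_id' mulr0 subr0.
  by lra.
- exists e => // rho' near; apply/C_plus_gensE => c c_gen.
  by have := pair_perturb c near; have := e_le c c_gen; lra.
Qed.

Lemma interior_ndag_gensE phi : linear_on_K vert phi ->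
  interior_ndag vert (ndag_plus vert Lam) phi <-> pos_on_gens phi.
Proof.
move=> lin; split=> [[e e_gt0 near] c c_gen | /gens_lower_bound [e e_gt0 e_le]].
- have [s [d' [_ _ [cd' _ _]]]] := c_gen.
  pose psi (k : Dvec) := phi k - e * k d'.
  have lin_psi : linear_on_K vert psi by move=> a b x y kx ky; rewrite /psi lin // ffunE; ring.
  have : 0 <= psi c.
    apply: near (gen_cone c_gen) => // k _ k_le1.
    have -> : psi k - phi k = - (e * k d') by rewrite /psi; ring.
    rewrite normrN normrM gtr0_norm // -[X in _ <= X]mulr1.
    by apply: ler_wpM2l; [exact: ltW | exact: k_le1].
  by rewrite /psi cd' mulr1; lra.
- exists e => // psi lin_psi near; apply/(ndag_plus_gensE lin_psi) => c c_gen.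
  have [s [d' [_ _ c_nvec]]] := c_gen.
  have := linK_perturb lin lin_psi (gen_kernel c_gen) (nvec_norm1_gt0 c_nvec) near.
  by have := e_le c c_gen; lra.
Qed.

(* Otherwise [Delta] would contain the whole ray [Q_{>=0} w], against boundedness. *)
Lemma exists_facet_neg (w : 'rV[rat]_n) : w != 0 -> exists2 u, u \in U & dot u w < 0.
Proof.
move=> w_neq0; have [/hasP [u uU hu]|/hasPn no_neg] := boolP (has (fun u => dot u w < 0) U).
  by exists u.
exfalso; case: Hrefl => _ _ [V [_ hull]] _.
pose B := \sum_(j < size V) `|dot w V`_j|.
have B_ge0 : 0 <= B by apply: sumr_ge0.
have bounded x : conv_hull V x -> dot w x <= B.
  move=> [lam [lam_ge0 lam_sum1 ->]]; rewrite dot_sum.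
  apply: (@le_trans _ _ (\sum_j lam j * B)); last by rewrite -big_distrl /= lam_sum1 mul1r.
  apply: ler_sum => j _; apply: ler_wpM2l => //; apply: le_trans (ler_norm _) _.
  by rewrite /B (bigD1 j) //= lerDl sumr_ge0.
have ww_gt0 := dot_self_gt0 w_neq0; pose t := (B + 1) / dot w w.
have t_ge0 : 0 <= t by apply: divr_ge0; [lra | exact: ltW].
have : in_polytope U (t *: w).
  move=> u uU; rewrite dotZ; apply: le_trans (mulr_ge0 t_ge0 _); first by rewrite lerN10.
  by rewrite leNgt; exact: no_neg.
by move/hull/bounded; rewrite dotZ /t divfK ?gt_eqF //; lra.
Qed.

(* Scale [w] onto the boundary and read off the support of its barycentric coordinates. *)
Lemma exists_cone_relint (w : 'rV[rat]_n) : w != 0 ->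
  exists2 t, t \in Lam & cone_relint vert t w.
Proof.
move=> w_neq0; have [u1 u1U hu1] := exists_facet_neg w_neq0.
have [u0 u0U hu0] := exists_seq_max (fun u => - dot u w) u1U.
set mu := - dot u0 w.
have mu_gt0 : 0 < mu by apply: lt_le_trans (hu0 u1 u1U); rewrite oppr_gt0.
have muVmu : mu^-1 * mu = 1 by rewrite mulVf // gt_eqF.
have : on_boundary U (mu^-1 *: w).
  split=> [u uU|]; last by exists u0 => //; rewrite dotZ -[dot u0 w]opprK mulrN muVmu.
  rewrite dotZ -muVmu -mulrN; apply: ler_wpM2l; first by rewrite invr_ge0 ltW.
  by rewrite lerNl; exact: hu0.
case: Hsd => _ faces _ cover _.
case/cover => s sL [lam [lam_ge0 lam_out lam_sum1 def_p]].
pose t := [set i | 0 < lam i].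
have lam_t i : i \notin t -> lam i = 0.
  rewrite inE => /negbTE lam_le0; apply/eqP.
  by rewrite eq_le lam_ge0 andbT leNgt lam_le0.
have t_sub_s : t \subset s.
  by apply/subsetP => i; rewrite inE; apply: contraTT => /lam_out ->; rewrite ltxx.
have t_neq0 : t != set0.
  apply/eqP => t0; move: lam_sum1; rewrite big1 => [/eqP|i _].
    by rewrite eq_sym oner_eq0.
  by apply: lam_t; rewrite t0 in_set0.
exists t; first exact: faces t_sub_s t_neq0.
exists (fun i => mu * lam i); split=> [i|]; first by rewrite inE; exact: mulr_gt0.
rewrite -[w]scale1r -(divff (lt0r_neq0 mu_gt0)) -scalerA def_p scaler_sumr [RHS]big_mkcond.
apply: eq_bigr => i _; rewrite scalerA.
by case: ifP => // /negbT /lam_t ->; rewrite mulr0 scale0r.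
Qed.

Lemma vert_neq0 i : vert i != 0.
Proof.
have [_ [u _]] := vert_on_boundary i; apply: contra_eq_neq => ->.
by rewrite dot0 eq_sym oppr_eq0 oner_eq0.
Qed.

(* If [s^perp_d'] is a face of [s], then [-d'] is a nonnegative combination of [s],
   which is [n^d'_s] itself. *)
Lemma nvec_ge0 s d' c : top_simplex n Lam s -> d' \notin s -> is_nvec vert s d' c ->
  ~ perp_not_sub vert Lam s d' -> forall i, 0 <= c i.
Proof.
move=> [sL _] d'_s c_nvec perp_sub.
have [|t tL [lam [lam_gt0 def_d']]] := exists_cone_relint (w := - vert d').
  by rewrite oppr_eq0 vert_neq0.
have t_sub_s : t \subset s.
  by apply/negPn/negP => t_not_sub; apply: perp_sub; exists t; split=> //; exists lam.
have d'_t : d' \notin t by apply: contra d'_s; exact: (subsetP t_sub_s).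
pose a i := if i \in t then lam i else 0.
have c'_nvec : is_nvec vert s d' [ffun i => a i + (i == d')%:R].
  apply: nvec_of_comb => [//|i i_s|].
    by rewrite /a ifF //; apply/negbTE; apply: contra i_s; exact: (subsetP t_sub_s).
  by rewrite def_d' [RHS]big_mkcond; apply: eq_bigr => i _; rewrite /a; case: ifP; rewrite ?scale0r.
move=> i; rewrite (nvec_unique sL c_nvec c'_nvec) ffunE addr_ge0 ?ler0n // /a.
by case: ifP => // i_t; exact: ltW (lam_gt0 i i_t).
Qed.

Lemma C_plus_D_plusE rho : C_plus vert Lam rho /\ D_plus rho <->
  D_plus rho /\ forall s d', top_simplex n Lam s -> d' \notin s -> perp_not_sub vert Lam s d' ->
                 forall c, is_nvec vert s d' c -> 0 <= pair rho c.
Proof.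
split=> [[/C_plus_gensE gens_ge0 rho_ge0] | [rho_ge0 perp_ge0]]; split=> //.
  by move=> s d' top_s d'_s _ c c_nvec; apply: gens_ge0; exists s, d'.
apply/C_plus_gensE => c [s [d' [top_s d'_s c_nvec]]].
have [perp|no_perp] := classic (perp_not_sub vert Lam s d').
  exact: perp_ge0 s d' top_s d'_s perp c c_nvec.
by apply: sumr_ge0 => i _; apply: mulr_ge0 => //; exact: nvec_ge0 no_perp i.
Qed.

Lemma interior_C_plus_D_plusE rho :
  interior_D (C_plus vert Lam) rho /\ D_plus_int rho <->
  D_plus_int rho /\ forall s d', top_simplex n Lam s -> d' \notin s ->
    perp_not_sub vert Lam s d' -> forall c, is_nvec vert s d' c -> 0 < pair rho c.
Proof.
split=> [[/interior_C_plus_gensE gens_gt0 rho_gt0] | [rho_gt0 perp_gt0]]; split=> //.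
  by move=> s d' top_s d'_s _ c c_nvec; apply: gens_gt0; exists s, d'.
apply/interior_C_plus_gensE => c [s [d' [top_s d'_s c_nvec]]].
have [perp|no_perp] := classic (perp_not_sub vert Lam s d').
  exact: perp_gt0 s d' top_s d'_s perp c c_nvec.
have rho_ge0 i : 0 <= rho i by exact: ltW.
apply: lt_le_trans (pair_ge_coord d' rho_ge0 (nvec_ge0 top_s d'_s c_nvec no_perp)).
by case: c_nvec => -> _ _; rewrite mulr1.
Qed.

(* A nonzero vector avoiding the hyperplanes spanned by the lower-dimensional simplices
   would lie in the cone over none of them. *)
Lemma top_simplex_exists (i0 : I) : exists s, top_simplex n Lam s.
Proof.
have [/exists_inP [s sL /eqP cs]|no_top] := boolP [exists s in Lam, #|s| == n].
  by exists s.
exfalso; have small s : s \in Lam -> (#|s| < n)%N.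
  move=> sL; rewrite ltn_neqAle -{2}(rank_simplex_mx sL) rank_leq_col andbT.
  by apply: contra no_top => cs; apply/exists_inP; exists s.
have [F F_normal] : exists F : {set I} -> 'rV[rat]_n, forall s, s \in Lam ->
    F s != 0 /\ forall i, i \in s -> dot (F s) (vert i) = 0.
  apply: (@fin_all_exists _ (fun=> 'rV[rat]_n)
    (fun s f => s \in Lam -> f != 0 /\ forall i, i \in s -> dot f (vert i) = 0)) => s.
  have [sL|_] := boolP (s \in Lam); last by exists 0.
  by have [f f_neq0 f_orth] := simplex_normal_exists sL (small s sL); exists f.
have [w w_avoid] := exists_vec_avoiding (fun s (sL : s \in Lam) => (F_normal s sL).1).
have w_neq0 : w != 0.
  have [i0L _ _ _ _] := Hsd.
  by apply: contra_neq (w_avoid _ (i0L i0)) => ->; rewrite dot0.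
have [t tL [lam [_ def_w]]] := exists_cone_relint w_neq0.
have := w_avoid t tL; rewrite def_w dot_sum big1 ?eqxx // => i i_t.
by rewrite (F_normal t tL).2 // mulr0.
Qed.

(* A kernel vector is determined by its coordinates off the top simplex [s]. *)
Lemma linK_repr s phi : top_simplex n Lam s -> linear_on_K vert phi ->
  exists rho : Dvec, [/\ forall i, i \in s -> rho i = 0,
    forall d', d' \notin s -> exists2 c, is_nvec vert s d' c & rho d' = phi c
  & forall k, in_kernel vert k -> phi k = pair rho k].
Proof.
move=> top_s lin.
have [G G_nvec] : exists G : I -> Dvec, forall d', d' \notin s -> is_nvec vert s d' (G d').
  apply: (@fin_all_exists _ (fun=> Dvec) (fun d' c => d' \notin s -> is_nvec vert s d' c)).
  move=> d'.
  have [_|d'_s] := boolP (d' \in s); first by exists 0.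
  by have [c c_nvec] := nvec_exists top_s d'_s; exists c.
pose G' d' : Dvec := if d' \in s then [ffun => 0] else G d'.
have kernel_G' d' : in_kernel vert (G' d').
  by rewrite /G'; case: ifPn => [_|/G_nvec []//]; exact: kernel0.
exists [ffun d' => if d' \in s then 0 else phi (G d')]; split.
- by move=> i i_s; rewrite ffunE i_s.
- by move=> d' d'_s; exists (G d'); rewrite ?ffunE ?(negbTE d'_s) //; exact: G_nvec.
move=> k kk; pose k' : Dvec := [ffun i => \sum_d' k d' * G' d' i].
have k'_out i : i \notin s -> k' i = k i.
  move=> i_s; rewrite ffunE (bigD1 i) //= /G' (negbTE i_s).
  have [-> _ _] := G_nvec i i_s; rewrite mulr1 big1 ?addr0 // => d' neq_d'i.
  case: ifPn => [_|/G_nvec [_ G_out _]]; first by rewrite ffunE mulr0.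
  by rewrite G_out ?mulr0 // eq_sym.
have k_eq : k = k'.
  apply/ffunP => i; apply/eqP; rewrite -subr_eq0; apply/eqP.
  apply: (simplex_free top_s.1 (a := fun i => k i - k' i)) => [j j_s|].
    by rewrite k'_out // subrr.
  under eq_bigr => j _ do rewrite scalerBl.
  by rewrite sumrB -/(beta vert k) -/(beta vert k') kk (kernel_comb _ _ kernel_G') subrr.
rewrite {1}k_eq (linK_sum lin _ _ kernel_G') /pair; apply: eq_bigr => i _; rewrite ffunE /G'.
by case: ifP => _; rewrite ?(linK0 lin) ?mul0r ?mulr0 // mulrC.
Qed.

Lemma nonneg_repr phi : linear_on_K vert phi -> nonneg_on_gens phi ->
  exists2 rho, D_plus rho & forall k, in_kernel vert k -> phi k = pair rho k.
Proof.
move=> lin phi_ge0; case: (pickP (@predT I)) => [i0 _|void]; last first.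
  have {}void (i : I) : False by have := void i.
  by exists [ffun => 0] => [i|]; [case: (void i) | exact: linK_void].
have [s top_s] := top_simplex_exists i0.
have [rho [rho_s rho_out repr]] := linK_repr top_s lin.
exists rho => // i; have [/rho_s -> //|/[dup] i_s /rho_out [c c_nvec ->]] := boolP (i \in s).
by apply: phi_ge0; exists s, i.
Qed.

(* Perturb the representative [rho0] (zero on [s], positive off [s]) by a small multiple
   of [beta^* y] with [y = 1] on [s]; this does not change the restriction to the kernel. *)
Lemma pos_repr phi : linear_on_K vert phi -> pos_on_gens phi ->
  exists2 rho, D_plus_int rho & forall k, in_kernel vert k -> phi k = pair rho k.
Proof.
move=> lin phi_gt0; case: (pickP (@predT I)) => [i0 _|void]; last first.
  have {}void (i : I) : False by have := void i.
  by exists [ffun => 0] => [i|]; [case: (void i) | exact: linK_void].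
have [s top_s] := top_simplex_exists i0.
have [rho0 [rho0_s rho0_out repr]] := linK_repr top_s lin.
have rho0_gt0 i : i \notin s -> 0 < rho0 i.
  by move=> i_s; have [c c_nvec ->] := rho0_out i i_s; apply: phi_gt0; exists s, i.
have [y y1] := top_simplex_solve top_s (fun=> 1).
pose f i := if i \in s then 1 else rho0 i / (`|dot y (vert i)| + 1).
have [|e e_gt0 e_le] := @exists_pos_lower_bound _ f.
  by move=> i; rewrite /f; case: ifPn => // i_s; rewrite divr_gt0 ?rho0_gt0 ?ltr_wpDl.
exists [ffun i => rho0 i + e * dot y (vert i)] => [i|k kk].
  rewrite ffunE; have := e_le i; rewrite /f.
  case: ifPn => [i_s _|i_s]; first by rewrite rho0_s // y1 // mulr1 add0r.
  move=> e_le_i; have {}e_le_i : e * (`|dot y (vert i)| + 1) <= rho0 i.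
    by rewrite -ler_pdivlMr // ltr_wpDl.
  rewrite mulrDr mulr1 in e_le_i.
  have : - (e * `|dot y (vert i)|) <= e * dot y (vert i).
    by have := lexx `|e * dot y (vert i)|; rewrite {1}ler_norml normrM gtr0_norm // => /andP [].
  by lra.
rewrite repr //; have -> : pair [ffun i => rho0 i + e * dot y (vert i)] k =
    pair rho0 k + e * pair [ffun i => dot y (vert i)] k.
  by rewrite /pair big_distrr -big_split /=; apply: eq_bigr => i _; rewrite !ffunE; ring.
by rewrite pair_beta_dual kk dot0 mulr0 addr0.
Qed.

Lemma iota_star_C_plus_D_plusE phi : linear_on_K vert phi ->
  iota_star_image vert (fun rho => C_plus vert Lam rho /\ D_plus rho) phi <->
  ndag_plus vert Lam phi.
Proof.
move=> lin; apply: iff_sym; apply: iff_trans (ndag_plus_gensE lin) _.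
split=> [phi_ge0 | [rho [/C_plus_gensE rho_ge0 _] repr] c c_gen].
  have [rho rho_ge0 repr] := nonneg_repr lin phi_ge0; exists rho => //; split=> //.
  by apply/C_plus_gensE => c c_gen; rewrite -repr; [exact: phi_ge0 | exact: gen_kernel].
by rewrite repr; [exact: rho_ge0 | exact: gen_kernel].
Qed.

Lemma iota_star_interiorE phi : linear_on_K vert phi ->
  iota_star_image vert
    (fun rho => interior_D (C_plus vert Lam) rho /\ D_plus_int rho) phi <->
  interior_ndag vert (ndag_plus vert Lam) phi.
Proof.
move=> lin; apply: iff_sym; apply: iff_trans (interior_ndag_gensE lin) _.
split=> [phi_gt0 | [rho [/interior_C_plus_gensE rho_gt0 _] repr] c c_gen].
  have [rho rho_gt0 repr] := pos_repr lin phi_gt0; exists rho => //; split=> //.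
  by apply/interior_C_plus_gensE => c c_gen; rewrite -repr; [exact: phi_gt0 | exact: gen_kernel].
by rewrite repr; [exact: rho_gt0 | exact: gen_kernel].
Qed.

End Decomposition.

Theorem proposition2p1 (n : nat) (U : seq 'rV[rat]_n) (I : finType)
    (vert : I -> 'rV[rat]_n) (Lam : {set {set I}}) :
  is_reflexive U ->
  is_vertex_set U vert ->
  generates_lattice vert ->
  simplicial_decomp U vert Lam ->
  (forall rho, C_plus vert Lam rho <-> hat_nLam vert Lam rho) /\
  (forall rho, (C_plus vert Lam rho /\ D_plus rho) <->
     (D_plus rho /\
      forall s d', top_simplex n Lam s -> d' \notin s -> perp_not_sub vert Lam s d' ->
        forall c, is_nvec vert s d' c -> 0 <= pair rho c)) /\
  (forall rho, (interior_D (C_plus vert Lam) rho /\ D_plus_int rho) <->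
     (D_plus_int rho /\
      forall s d', top_simplex n Lam s -> d' \notin s -> perp_not_sub vert Lam s d' ->
        forall c, is_nvec vert s d' c -> 0 < pair rho c)) /\
  (forall phi, linear_on_K vert phi ->
     (iota_star_image vert (fun rho => C_plus vert Lam rho /\ D_plus rho) phi <->
      ndag_plus vert Lam phi)) /\
  (forall phi, linear_on_K vert phi ->
     (iota_star_image vert (fun rho => interior_D (C_plus vert Lam) rho /\ D_plus_int rho) phi <->
      interior_ndag vert (ndag_plus vert Lam) phi)).
Proof.
move=> Hrefl Hvert _ Hsd.
split; first exact: C_plus_hatE Hvert Hsd.
split; first exact: C_plus_D_plusE Hrefl Hvert Hsd.
split; first exact: interior_C_plus_D_plusE Hrefl Hvert Hsd.
split=> phi; first exact: iota_star_C_plus_D_plusE Hrefl Hvert Hsd phi.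
exact: iota_star_interiorE Hrefl Hvert Hsd phi.
Qed.
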